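(* Let $z=(z_1,\ldots,z_n)\in\mathbb{R}^n$, let $\mathcal{I}=\{i : z_i>0\}$, and let $f_z(a)=\sum_{i=1}^n |z_i-a_i|$ for $a\in\mathbb{R}^n$. Let $d\in DS_n$ be a minimizer of $f_z$ over $DS_n$ such that $d_j>0$ for at least one $j\notin\mathcal{I}$. Then there exists $d^*\in DS_n$ with $d^*_i=0$ for all $i\notin\mathcal{I}$ and $f_z(d^* )=f_z(d)$.
   Context: All graphs are simple (no loops, no multiple edges) on the vertex set $\{1,\ldots,n\}$. The degree sequence of such a graph is the vector $(d_1,\ldots,d_n)$ where $d_i$ is the number of neighbours of vertex $i$. $DS_n$ denotes the set of all degree sequences of simple graphs on $\{1,\ldots,n\}$. *)

From HB Require Import structures.
From mathcomp Require Import all_boot all_order all_algebra.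
Set Implicit Arguments. Unset Strict Implicit. Unset Printing Implicit Defensive.
Import Order.TTheory GRing.Theory Num.Theory.

Definition simple_graph (n : nat) (e : rel 'I_n) : Prop :=
  symmetric e /\ irreflexive e.

Definition degree (n : nat) (e : rel 'I_n) (i : 'I_n) : nat :=
  #|[set j | e i j]|.

Definition DS (n : nat) (d : 'I_n -> nat) : Prop :=
  exists e : rel 'I_n, simple_graph e /\ forall i, d i = degree e i.

Definition fz (R : realFieldType) (n : nat) (z : 'I_n -> R) (a : 'I_n -> nat) : R :=
  (\sum_(i < n) `|z i - (a i)%:R|)%R.

From mathcomp Require Import all_boot all_order all_algebra.
From mathcomp Require Import ring.
Set Implicit Arguments. Unset Strict Implicit. Unset Printing Implicit Defensive.
Import Order.TTheory GRing.Theory Num.Theory.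
Local Open Scope ring_scope.

(* Replace the graph realising d by its subgraph induced on the vertices with
   z_i > 0.  A positive vertex i loses its c_i edges to non-positive vertices,
   which costs at most c_i in |z_i - d_i|; a non-positive vertex i drops to
   degree 0, which gains exactly d_i.  Each lost edge from a positive vertex
   counts towards the degree of a non-positive one, so the total cost is at most
   the total gain and the new degree sequence is no worse than d; minimality of
   d gives equality. *)

Definition induced_rel (T : Type) (e : rel T) (P : pred T) : rel T :=
  fun x y => [&& e x y, P x & P y].

Lemma simple_graph_induced (n : nat) (e : rel 'I_n) (P : pred 'I_n) :
  simple_graph e -> simple_graph (induced_rel e P).
Proof.
rewrite /simple_graph /induced_rel; case=> esym eirr.
by split=> [x y | x]; rewrite ?eirr // esym esym (andbC (P x)).
Qed.

Lemma DS_degree (n : nat) (e : rel 'I_n) : simple_graph e -> DS (degree e).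
Proof. by exists e. Qed.

Lemma degreeE (n : nat) (e : rel 'I_n) (i : 'I_n) :
  degree e i = (\sum_j e i j)%N.
Proof.
by rewrite /degree -sum1_card big_mkcond; apply: eq_bigr => j _; rewrite inE.
Qed.

Lemma degree_induced_out (n : nat) (e : rel 'I_n) (P : pred 'I_n) (i : 'I_n) :
  ~~ P i -> degree (induced_rel e P) i = 0%N.
Proof.
by move=> Pi; rewrite degreeE big1 // => j _; rewrite /induced_rel (negbTE Pi) andbF.
Qed.

Lemma degree_induced_in (n : nat) (e : rel 'I_n) (P : pred 'I_n) (i : 'I_n) :
  P i -> degree e i = (degree (induced_rel e P) i + \sum_j (e i j && ~~ P j))%N.
Proof.
move=> Pi; rewrite !degreeE -big_split; apply: eq_bigr => j _ /=.
by rewrite /induced_rel Pi; case: (e i j); case: (P j).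
Qed.

Lemma sum_cross_edges_le (T : finType) (e : rel T) (P : pred T) :
  symmetric e ->
  (\sum_(i | P i) \sum_j (e i j && ~~ P j) <= \sum_(i | ~~ P i) \sum_j e i j)%N.
Proof.
move=> esym.
have -> : (\sum_(i | P i) \sum_j (e i j && ~~ P j) =
           \sum_i \sum_j [&& P i, e i j & ~~ P j])%N.
  by rewrite big_mkcond; apply: eq_bigr => i _; case: (P i) => //=; rewrite big1.
have -> : (\sum_(i | ~~ P i) \sum_j e i j = \sum_i \sum_j (~~ P i && e i j))%N.
  by rewrite big_mkcond; apply: eq_bigr => i _; case: (P i) => //=; rewrite big1.
rewrite exchange_big; apply: leq_sum => j _; apply: leq_sum => i _.
by rewrite esym; case: (P i); case: (P j); case: (e j i).
Qed.

Lemma ler_dist_natD (R : numDomainType) (x : R) (a c : nat) :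
  `|x - a%:R| <= `|x - (a + c)%:R| + c%:R.
Proof.
have -> : x - a%:R = (x - (a + c)%:R) + c%:R by rewrite natrD; ring.
by rewrite -[X in _ <= _ + X]normr_nat ler_normD.
Qed.

Lemma nonpos_dist_nat (R : realDomainType) (x : R) (a : nat) :
  x <= 0 -> `|x - 0%:R| + a%:R = `|x - a%:R|.
Proof.
move=> x_le0; rewrite subr0 (ler0_norm x_le0) ler0_norm; first by ring.
by rewrite subr_le0 (le_trans x_le0).
Qed.

Lemma fz_degree_induced_le (R : realFieldType) (n : nat) (z : 'I_n -> R)
    (e : rel 'I_n) (P : pred 'I_n) :
  symmetric e -> (forall i, ~~ P i -> z i <= 0) ->
  fz z (degree (induced_rel e P)) <= fz z (degree e).
Proof.
move=> esym z_le0.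
pose cross i := (\sum_j (e i j && ~~ P j))%N.
have vertex_le i : `|z i - (degree (induced_rel e P) i)%:R|
                   + (if ~~ P i then degree e i else 0)%:R
                <= `|z i - (degree e i)%:R| + (if P i then cross i else 0)%:R.
  case: (boolP (P i)) => Pi /=.
  - by rewrite addr0 (degree_induced_in e Pi) ler_dist_natD.
  - by rewrite addr0 degree_induced_out // nonpos_dist_nat ?z_le0.
have cross_le : ((\sum_i if P i then cross i else 0)%:R
                 <= (\sum_i if ~~ P i then degree e i else 0)%:R :> R).
  rewrite ler_nat -!big_mkcond /=.
  under [X in (_ <= X)%N]eq_bigr => i _ do rewrite degreeE.
  exact: sum_cross_edges_le.
have := ler_sum (index_enum _) (fun i (_ : true) => vertex_le i).
rewrite !big_split /= -!natr_sum /fz.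
move: cross_le; set A := (\sum_i _)%:R; set B := (\sum_i _)%:R => AB sum_le.
by rewrite -(lerD2r B) (le_trans sum_le) // lerD2l.
Qed.

Theorem lemma4 (R : realFieldType) (n : nat) (z : 'I_n -> R) (d : 'I_n -> nat)
  (hd : DS d)
  (hmin : forall a : 'I_n -> nat, DS a -> fz z d <= fz z a)
  (hj : exists j : 'I_n, z j <= 0 /\ (0 < d j)%N) :
  exists ds : 'I_n -> nat,
    DS ds /\ (forall i : 'I_n, z i <= 0 -> ds i = 0%N) /\ fz z ds = fz z d.
Proof.
case: hd => e [ge d_deg]; pose P : pred 'I_n := fun i => 0 < z i.
have notP i : ~~ P i = (z i <= 0) by rewrite /P -leNgt.
have ds_DS : DS (degree (induced_rel e P)) by apply/DS_degree/simple_graph_induced.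
exists (degree (induced_rel e P)); split=> //; split.
  by move=> i; rewrite -notP; apply: degree_induced_out.
have fz_d : fz z d = fz z (degree e) by apply: eq_bigr => i _; rewrite d_deg.
apply/le_anti; rewrite hmin // andbT fz_d.
by apply: fz_degree_induced_le => [|i]; [case: ge | rewrite notP].
Qed.
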